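(* Let $C$ be an ordered field, $I$ a nonempty index set, $G$ an $I$-ordered $C$-vector space and $((P_i,Q_i))_{i\in I}$ a polycut in $G$. Then there are an $I$-ordered $C$-vector space $G'$ extending $G$ and an element $b\in G'$ such that (1) for any $I$-ordered $C$-vector space extension $G^*$ of $G$ and any $b^*\in G^*$ realizing the polycut $((P_i,Q_i))_{i\in I}$, there is an embedding $G'\to G^*$ over $G$ of $I$-ordered $C$-vector spaces sending $b$ to $b^*$. Furthermore, for any $I$-ordered $C$-vector space $G'$ extending $G$ and any $b\in G'$ satisfying (1), we have (2) $b$ realizes the polycut $((P_i,Q_i))_{i\in I}$, and (3) $G'=G\oplus Cb$ (internal direct sum of $C$-vector spaces).
   Context: An $I$-ordered $C$-vector space is a $C$-vector space $G$ with a family $(<_i)_{i\in I}$ of total orderings such that each $(G,<_i)$ is an ordered $C$-vector space. $G'$ extends $G$ if $G$ is a $C$-subspace of $G'$ and each $<_i$ on $G$ is the restriction of $<_i$ on $G'$. An embedding of $I$-ordered $C$-vector spaces is a $C$-linear injective map $j$ with $x>_i0\Rightarrow j(x)>_i0$ for all $i$. A polycut in $G$ is a family $((P_i,Q_i))_{i\in I}$ where each $P_i$ is a downward closed subset of $(G,<_i)$ and $Q_i=G\setminus P_i$; an element $b$ of an extension realizes it if $P_i<_i b<_i Q_i$ for every $i\in I$. *)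

From HB Require Import structures.
From mathcomp Require Import all_boot all_order all_algebra.
Set Implicit Arguments. Unset Strict Implicit. Unset Printing Implicit Defensive.
Import Order.TTheory GRing.Theory Num.Theory.
Local Open Scope ring_scope.

Definition ordered_lmod (C : realFieldType) (G : lmodType C)
  (lt : G -> G -> Prop) : Prop :=
  [/\ (forall x, ~ lt x x),
      (forall x y z, lt x y -> lt y z -> lt x z),
      (forall x y, [\/ lt x y, x = y | lt y x]),
      (forall x y z, lt x y -> lt (x + z) (y + z)) &
      (forall (c : C) x y, 0 < c -> lt x y -> lt (c *: x) (c *: y))].

Definition Iordered (C : realFieldType) (I : Type) (G : lmodType C)
  (lt : I -> G -> G -> Prop) : Prop := forall i, ordered_lmod (lt i).

Definition extends (C : realFieldType) (I : Type) (G G' : lmodType C)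
  (lt : I -> G -> G -> Prop) (lt' : I -> G' -> G' -> Prop)
  (f : {linear G -> G'}) : Prop :=
  injective f /\ forall i x y, lt i x y <-> lt' i (f x) (f y).

Definition embedding (C : realFieldType) (I : Type) (A B : lmodType C)
  (ltA : I -> A -> A -> Prop) (ltB : I -> B -> B -> Prop)
  (j : {linear A -> B}) : Prop :=
  injective j /\ forall i x, ltA i 0 x -> ltB i 0 (j x).

(* Polycut: P i is downward closed in (G, <_i); Q i is its complement. *)
Definition polycut (C : realFieldType) (I : Type) (G : lmodType C)
  (lt : I -> G -> G -> Prop) (P : I -> G -> Prop) : Prop :=
  forall i x y, P i y -> lt i x y -> P i x.

Definition realizes (C : realFieldType) (I : Type) (G G' : lmodType C)
  (lt' : I -> G' -> G' -> Prop) (f : {linear G -> G'})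
  (P : I -> G -> Prop) (b : G') : Prop :=
  forall i, (forall x, P i x -> lt' i (f x) b) /\
            (forall x, ~ P i x -> lt' i b (f x)).

Definition universal_realizer (C : realFieldType) (I : Type) (G : lmodType C)
  (lt : I -> G -> G -> Prop) (P : I -> G -> Prop)
  (G' : lmodType C) (lt' : I -> G' -> G' -> Prop) (f : {linear G -> G'})
  (b : G') : Prop :=
  forall (Gs : lmodType C) (lts : I -> Gs -> Gs -> Prop)
         (fs : {linear G -> Gs}) (bs : Gs),
    Iordered lts -> extends lt lts fs -> realizes lts fs P bs ->
    exists j : {linear G' -> Gs},
      [/\ embedding lt' lts j, (forall x, j (f x) = fs x) & j b = bs].

Definition direct_sum_line (C : realFieldType) (G G' : lmodType C)
  (f : {linear G -> G'}) (b : G') : Prop :=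
  (forall y : G', exists (x : G) (c : C), y = f x + c *: b) /\
  (forall (x : G) (c : C), f x = c *: b -> f x = 0).

From HB Require Import structures.
From mathcomp Require Import all_boot all_order all_algebra.
From Stdlib Require Import Classical.
Set Implicit Arguments. Unset Strict Implicit. Unset Printing Implicit Defensive.
Import Order.TTheory GRing.Theory Num.Theory.
Local Open Scope ring_scope.

(* The universal realization is G x C, the pair (x, d) standing for x + d b.
   Since -x/d lies in G, hence in P_i or in Q_i, the sign of x + d b under <_i
   is forced by the cut: for d > 0 it is positive iff x + d p >=_i 0 for some
   p in P_i, for d < 0 iff x + d q >=_i 0 for some q in Q_i, and for d = 0 iff
   x >_i 0.  These sets are positive cones, and a realization b* of the cut in
   an extension G* makes (x, d) |-> x + d b* positive on them, hence an
   embedding.  Conversely, a universal (G', b) embeds over G into this model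
   with b |-> (0, 1); the embedding reflects every <_i and is injective, so b
   realizes the cut and G' = G + C b is a direct sum. *)

Definition cone_lt (C : realFieldType) (G : lmodType C) (Pos : G -> Prop)
  (x y : G) : Prop := Pos (y - x).

Lemma cone_ordered_lmod (C : realFieldType) (G : lmodType C) (Pos : G -> Prop) :
  ~ Pos 0 -> (forall x y, Pos x -> Pos y -> Pos (x + y)) ->
  (forall c x, 0 < c -> Pos x -> Pos (c *: x)) ->
  (forall x, [\/ Pos x, x = 0 | Pos (- x)]) ->
  ordered_lmod (cone_lt Pos).
Proof.
move=> Pos0 PosD PosZ Pos_total; rewrite /cone_lt; split.
- by move=> x; rewrite subrr.
- by move=> x y z Pyx Pzy; rewrite -[z](subrK y) -addrA; apply: PosD.
- move=> x y; case: (Pos_total (y - x)) => [|/subr0_eq ->|]; rewrite ?opprB;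
  by constructor.
- by move=> x y z; rewrite opprD addrACA subrr addr0.
- by move=> c x y c_gt0 Pyx; rewrite -scalerBr; apply: PosZ.
Qed.

Section OrderedLmod.
Variables (C : realFieldType) (G : lmodType C) (lt : G -> G -> Prop).
Hypothesis ordG : ordered_lmod lt.

Lemma olt_irr x : ~ lt x x. Proof. by case: ordG. Qed.

Lemma olt_trans x y z : lt x y -> lt y z -> lt x z.
Proof. by case: ordG => _ trans _ _ _; apply: trans. Qed.

Lemma olt_total x y : [\/ lt x y, x = y | lt y x].
Proof. by case: ordG. Qed.

Lemma olt_add2r z x y : lt x y -> lt (x + z) (y + z).
Proof. by case: ordG => _ _ _ add _; apply: add. Qed.

Lemma olt_scale2l c x y : 0 < c -> lt x y -> lt (c *: x) (c *: y).
Proof. by case: ordG => _ _ _ _ scale; apply: scale. Qed.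

Lemma olt_asym x y : lt x y -> ~ lt y x.
Proof. by move=> ltxy /(olt_trans ltxy); apply: olt_irr. Qed.

Lemma olt_subr x y : lt x y <-> lt 0 (y - x).
Proof.
split=> [|lt0yx]; first by rewrite -(subrr x); apply: olt_add2r.
by have := olt_add2r x lt0yx; rewrite add0r subrK.
Qed.

Lemma olt_oppr x y : lt x y -> lt (- y) (- x).
Proof. by move=> /olt_subr ltxy; apply/olt_subr; rewrite opprK addrC. Qed.

Lemma olt0_scale c x : 0 < c -> lt 0 x -> lt 0 (c *: x).
Proof. by move=> c_gt0 /(olt_scale2l c_gt0); rewrite scaler0. Qed.

Definition nneg (x : G) : Prop := lt 0 x \/ x = 0.

Lemma nneg_total x y : nneg (y - x) \/ nneg (x - y).
Proof.
case: (olt_total x y) => [/olt_subr|->|/olt_subr]; rewrite /nneg; try tauto.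
by rewrite subrr; tauto.
Qed.

Lemma olt0_addr x y : lt 0 x -> nneg y -> lt 0 (x + y).
Proof.
move=> lt0x [lt0y|->]; last by rewrite addr0.
by apply: olt_trans lt0x _; apply/olt_subr; rewrite addrAC subrr add0r.
Qed.

Lemma nneg_add x y : nneg x -> nneg y -> nneg (x + y).
Proof. by case=> [lt0x nny|->]; [left; apply: olt0_addr | rewrite add0r]. Qed.

Lemma nneg_scale c x : 0 < c -> nneg x -> nneg (c *: x).
Proof.
by move=> c_gt0 [lt0x|->]; [left; apply: olt0_scale | right; rewrite scaler0].
Qed.

End OrderedLmod.

Section PositiveLinear.
Variables (C : realFieldType) (A B : lmodType C).
Variables (ltA : A -> A -> Prop) (ltB : B -> B -> Prop).
Hypotheses (ordA : ordered_lmod ltA) (ordB : ordered_lmod ltB).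
Variables (j : {linear A -> B}) (j_pos : forall x, ltA 0 x -> ltB 0 (j x)).

Lemma pos_linear_mono u v : ltA u v -> ltB (j u) (j v).
Proof. by move=> /(olt_subr ordA)/j_pos; rewrite linearB => /(olt_subr ordB _ _).2. Qed.

Lemma pos_linear_inj : injective j.
Proof.
move=> u v eq_j; case: (olt_total ordA u v) => [|//|] /pos_linear_mono;
  by rewrite eq_j => /(olt_irr ordB).
Qed.

Lemma pos_linear_reflect u v : ltB (j u) (j v) -> ltA u v.
Proof.
move=> ltj; case: (olt_total ordA u v) => [//|eq_uv|/pos_linear_mono ltj'].
- by rewrite eq_uv in ltj; case: (olt_irr ordB ltj).
- by case: (olt_asym ordB ltj ltj').
Qed.

End PositiveLinear.

Section CutCone.
Variables (C : realFieldType) (G : lmodType C) (lt : G -> G -> Prop) (P : G -> Prop).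
Hypotheses (ordG : ordered_lmod lt) (downP : forall x y, P y -> lt x y -> P x).

Definition cut_pos (u : G * C^o) : Prop :=
  [\/ u.2 = 0 /\ lt 0 u.1,
      0 < u.2 /\ exists2 p, P p & nneg lt (u.1 + u.2 *: p)
    | u.2 < 0 /\ exists2 q, ~ P q & nneg lt (u.1 + u.2 *: q)].

Lemma cut_lt p q : P p -> ~ P q -> lt p q.
Proof.
move=> Pp nPq; case: (olt_total ordG p q) => // [eq_pq|ltqp].
- by rewrite -eq_pq in nPq.
- by case: nPq; apply: downP ltqp.
Qed.

Lemma nneg_shift d x a b :
  0 < d -> nneg lt (x + d *: a) -> nneg lt (b - a) -> nneg lt (x + d *: b).
Proof.
move=> d_gt0 nn_a nn_ba; have := nneg_add ordG nn_a (nneg_scale ordG d_gt0 nn_ba).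
by rewrite scalerBr addrACA subrr addr0.
Qed.

Lemma nneg_shiftN d x a b :
  d < 0 -> nneg lt (x + d *: a) -> nneg lt (a - b) -> nneg lt (x + d *: b).
Proof.
have flip (y : G) : d *: y = (- d) *: (- y) by rewrite scaleNr scalerN opprK.
rewrite -oppr_gt0 !flip => d_lt0 nn_a nn_ab.
by apply: nneg_shift nn_a _ => //; rewrite opprK addrC.
Qed.

Lemma olt0_shift d x a b :
  0 < d -> nneg lt (x + d *: a) -> lt 0 (b - a) -> lt 0 (x + d *: b).
Proof.
move=> d_gt0 nn_a lt_ab; have := olt0_addr ordG (olt0_scale ordG d_gt0 lt_ab) nn_a.
by rewrite addrC scalerBr addrACA subrr addr0.
Qed.

Lemma nneg_witnessD x1 x2 d1 d2 g :
  nneg lt (x1 + d1 *: g) -> nneg lt (x2 + d2 *: g) ->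
  nneg lt ((x1 + x2) + (d1 + d2) *: g).
Proof. by move=> nn1 nn2; rewrite scalerDl addrACA; apply: nneg_add. Qed.

Lemma cut_pos0 : ~ cut_pos 0.
Proof. by case=> [][] /=; [move=> _ /(olt_irr ordG) | rewrite ltxx | rewrite ltxx]. Qed.

Lemma cut_posZ c u : 0 < c -> cut_pos u -> cut_pos (c *: u).
Proof.
case: u => x d c_gt0 /= [[/= -> lt0x]|[/= d_gt0 [p Pp nn_p]]|[/= d_lt0 [q nPq nn_q]]].
- by constructor 1; split => /=; [exact: mulr0 | apply: olt0_scale].
- constructor 2; split => /=; first by rewrite mulr_gt0.
  by exists p => //; rewrite -scalerA -scalerDr; apply: nneg_scale.
- constructor 3; split => /=; first by rewrite pmulr_rlt0.
  by exists q => //; rewrite -scalerA -scalerDr; apply: nneg_scale.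
Qed.

Lemma cut_pos_total u : [\/ cut_pos u, u = 0 | cut_pos (- u)].
Proof.
case: u => x d; have -> : - (x, d) = (- x, - d) :> G * C^o by [].
set r := - (d^-1 *: x).
have root : d != 0 -> x + d *: r = 0.
  by move=> d_neq0; rewrite scalerN scalerA mulfV ?scale1r ?subrr.
have rootN : d != 0 -> - x + (- d) *: r = 0.
  by move=> /root; rewrite scaleNr -opprD => ->; rewrite oppr0.
case: (ltgtP d 0) => [d_lt0|d_gt0|->].
- have d_neq0 := ltr0_neq0 d_lt0; case: (classic (P r)) => Pr.
  + constructor 3; constructor 2; split => /=; first by rewrite oppr_gt0.
    by exists r => //; right; apply: rootN.
  + by constructor 1; constructor 3; split => //=; exists r => //; right; apply: root.
- have d_neq0 := lt0r_neq0 d_gt0; case: (classic (P r)) => Pr.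
  + by constructor 1; constructor 2; split => //=; exists r => //; right; apply: root.
  + constructor 3; constructor 3; split => /=; first by rewrite oppr_lt0.
    by exists r => //; right; apply: rootN.
- case: (olt_total ordG 0 x) => [lt0x|<-|ltx0]; first by do 2 constructor 1.
  + by constructor 2.
  + constructor 3; constructor 1; split => /=; first by rewrite oppr0.
    by have := olt_oppr ordG ltx0; rewrite oppr0.
Qed.

Lemma cut_pos_addl x1 x2 d2 : lt 0 x1 -> cut_pos (x2, d2) -> cut_pos (x1 + x2, d2).
Proof.
move=> lt0x1 [[/= -> lt0x2]|[/= d_gt0 [p Pp nn_p]]|[/= d_lt0 [q nPq nn_q]]].
- by constructor 1; split => //=; apply: olt0_addr => //; left.
- constructor 2; split => //=; exists p => //.
  by rewrite -addrA; apply: nneg_add => //; left.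
- constructor 3; split => //=; exists q => //.
  by rewrite -addrA; apply: nneg_add => //; left.
Qed.

Lemma cut_pos_addPQ x1 x2 d1 d2 p q : 0 < d1 -> P p -> nneg lt (x1 + d1 *: p) ->
  d2 < 0 -> ~ P q -> nneg lt (x2 + d2 *: q) -> cut_pos (x1 + x2, d1 + d2).
Proof.
(* Both witnesses can be moved to p or to q; at q the first becomes strict
   since p < q, which settles the case d1 + d2 = 0. *)
move=> d1_gt0 Pp nn_p d2_lt0 nPq nn_q.
have lt_pq : lt 0 (q - p) := (olt_subr ordG p q).1 (cut_lt Pp nPq).
have lt0_1q := olt0_shift d1_gt0 nn_p lt_pq.
have nn_2p := nneg_shiftN d2_lt0 nn_q (or_introl lt_pq).
case: (ltgtP (d1 + d2) 0) => [d_lt0|d_gt0|d_eq0].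
- constructor 3; split => //=; exists q => //.
  by apply: nneg_witnessD nn_q; left.
- constructor 2; split => //=; exists p => //.
  exact: nneg_witnessD.
- constructor 1; split => //=.
  have -> : x1 + x2 = (x1 + d1 *: q) + (x2 + d2 *: q).
    by rewrite addrACA -scalerDl d_eq0 scale0r addr0.
  exact: olt0_addr.
Qed.

Lemma cut_posD u v : cut_pos u -> cut_pos v -> cut_pos (u + v).
Proof.
case: u => x1 d1; case: v => x2 d2.
change (cut_pos (x1, d1) -> cut_pos (x2, d2) -> cut_pos (x1 + x2, d1 + d2)).
move=> [[/= -> lt0x1]|[/= d1_gt0 [p1 Pp1 nn1]]|[/= d1_lt0 [q1 nPq1 nn1]]] pos2.
- by rewrite add0r; apply: cut_pos_addl.
- case: pos2 => [[/= -> lt0x2]|[/= d2_gt0 [p2 Pp2 nn2]]|[/= d2_lt0 [q2 nPq2 nn2]]].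
  + rewrite addrC addr0; apply: cut_pos_addl => //.
    by constructor 2; split => //; exists p1.
  + constructor 2; split => /=; first exact: addr_gt0.
    case: (nneg_total ordG p1 p2) => [le12|le21].
    * by exists p2 => //; apply: nneg_witnessD (nneg_shift d1_gt0 nn1 le12) nn2.
    * by exists p1 => //; apply: nneg_witnessD nn1 (nneg_shift d2_gt0 nn2 le21).
  + exact: cut_pos_addPQ d1_gt0 Pp1 nn1 d2_lt0 nPq2 nn2.
- case: pos2 => [[/= -> lt0x2]|[/= d2_gt0 [p2 Pp2 nn2]]|[/= d2_lt0 [q2 nPq2 nn2]]].
  + rewrite addrC addr0; apply: cut_pos_addl => //.
    by constructor 3; split => //; exists q1.
  + by rewrite addrC (addrC d1); apply: cut_pos_addPQ d2_gt0 Pp2 nn2 d1_lt0 nPq1 nn1.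
  + constructor 3; split => /=; first by rewrite ltr_nwDr // ltW.
    case: (nneg_total ordG q1 q2) => [le12|le21].
    * by exists q1 => //; apply: nneg_witnessD nn1 (nneg_shiftN d2_lt0 nn2 le12).
    * by exists q2 => //; apply: nneg_witnessD (nneg_shiftN d1_lt0 nn1 le21) nn2.
Qed.

Lemma cut_pos_base x : cut_pos (x, 0) <-> lt 0 x.
Proof.
split=> [|lt0x]; last by constructor 1.
by case=> [[]|[]|[]] //=; rewrite ltxx.
Qed.

End CutCone.

Definition adjoin_inj (C : realFieldType) (G : lmodType C) (x : G) : G * C^o := (x, 0).

Lemma adjoin_inj_linear (C : realFieldType) (G : lmodType C) : linear (@adjoin_inj C G).
Proof. by move=> a x y; congr (_, _); rewrite /= ?mulr0 ?scaler0 ?addr0. Qed.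

HB.instance Definition _ (C : realFieldType) (G : lmodType C) :=
  GRing.isLinear.Build C G (G * C^o)%type *:%R (@adjoin_inj C G) (@adjoin_inj_linear C G).

Definition adjoin_gen (C : realFieldType) (G : lmodType C) : (G * C^o)%type := (0, 1).
Arguments adjoin_gen {C G}.

Section EvalAt.
Variables (C : realFieldType) (G Gs : lmodType C) (fs : {linear G -> Gs}) (bs : Gs).

Definition eval_at (u : G * C^o) : Gs := fs u.1 + u.2 *: bs.

Lemma eval_at_linear : linear eval_at.
Proof.
move=> a [x1 d1] [x2 d2]; rewrite /eval_at /=.
by rewrite linearD linearZ scalerDl -scalerA scalerDr addrACA.
Qed.

HB.instance Definition _ :=
  GRing.isLinear.Build C (G * C^o)%type Gs *:%R eval_at eval_at_linear.

Lemma eval_at_adjoin_inj x : eval_at (adjoin_inj x) = fs x.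
Proof. by rewrite /eval_at scale0r addr0. Qed.

Lemma eval_at_adjoin_gen : eval_at adjoin_gen = bs.
Proof. by rewrite /eval_at linear0 add0r scale1r. Qed.

Variables (lt : G -> G -> Prop) (P : G -> Prop) (lts : Gs -> Gs -> Prop).
Hypotheses (ordGs : ordered_lmod lts) (fs_pos : forall x, lt 0 x -> lts 0 (fs x)).
Hypotheses (bs_above : forall p, P p -> lts (fs p) bs)
           (bs_below : forall q, ~ P q -> lts bs (fs q)).

Lemma eval_at_pos u : cut_pos lt P u -> lts 0 (eval_at u).
Proof.
have fs_nneg w : nneg lt w -> nneg lts (fs w).
  by case=> [/fs_pos|->]; [left | right; rewrite linear0].
have from_witness x d g : nneg lt (x + d *: g) -> lts (d *: fs g) (d *: bs) ->
    lts 0 (fs x + d *: bs).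
  move=> /fs_nneg; rewrite linearD linearZ => nn_g /(olt_subr ordGs) lt_gb.
  by have := olt0_addr ordGs lt_gb nn_g; rewrite addrC addrACA subrr addr0.
case: u => x d [[/= -> /fs_pos]|[/= d_gt0 [p Pp nn_p]]|[/= d_lt0 [q nPq nn_q]]];
  rewrite /eval_at /=.
- by rewrite scale0r addr0.
- exact/(from_witness _ _ _ nn_p)/(olt_scale2l ordGs d_gt0)/bs_above.
- apply: (from_witness _ _ _ nn_q); rewrite -oppr_gt0 in d_lt0.
  have := olt_oppr ordGs (olt_scale2l ordGs d_lt0 (bs_below nPq)).
  by rewrite !scaleNr !opprK.
Qed.

End EvalAt.

Section CutExtension.
Variables (C : realFieldType) (I : Type) (G : lmodType C).
Variables (lt : I -> G -> G -> Prop) (P : I -> G -> Prop).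
Hypotheses (ordG : Iordered lt) (cutP : polycut lt P).

Definition cut_ext_lt i : G * C^o -> G * C^o -> Prop := cone_lt (cut_pos (lt i) (P i)).

Lemma cut_ext_Iordered : Iordered cut_ext_lt.
Proof.
move=> i; have downP : forall x y, P i y -> lt i x y -> P i x by apply: cutP.
apply: cone_ordered_lmod.
- exact: cut_pos0.
- exact: cut_posD.
- exact: cut_posZ.
- exact: cut_pos_total.
Qed.

Lemma cut_ext_extends : extends lt cut_ext_lt (@adjoin_inj C G).
Proof.
split=> [x y [] //|i x y].
rewrite /cut_ext_lt /cone_lt -linearB cut_pos_base.
exact: olt_subr.
Qed.

Lemma adjoin_gen_realizes : realizes cut_ext_lt (@adjoin_inj C G) P adjoin_gen.
Proof.
move=> i; split=> x Px; rewrite /cut_ext_lt /cone_lt.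
- have -> : adjoin_gen - adjoin_inj x = (- x, 1).
    by congr (_, _); rewrite /= ?sub0r ?subr0.
  constructor 2; split; first exact: ltr01.
  by exists x => //; right; rewrite scale1r addNr.
- have -> : adjoin_inj x - adjoin_gen = (x, -1).
    by congr (_, _); rewrite /= ?sub0r ?subr0.
  constructor 3; split; first by rewrite oppr_lt0 ltr01.
  by exists x => //; right; rewrite scaleN1r subrr.
Qed.

Lemma cut_ext_universal (i0 : I) :
  universal_realizer lt P cut_ext_lt (@adjoin_inj C G) adjoin_gen.
Proof.
move=> Gs lts fs bs ordGs [_ fs_lt] bs_real.
have fs_pos i x : lt i 0 x -> lts i 0 (fs x) by move=> /fs_lt; rewrite linear0.
have eval_pos i u : cut_ext_lt i 0 u -> lts i 0 (eval_at fs bs u).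
  rewrite /cut_ext_lt /cone_lt subr0.
  exact: (eval_at_pos (ordGs i) (fs_pos i) (bs_real i).1 (bs_real i).2).
exists (eval_at fs bs); split; [split=> // | exact: eval_at_adjoin_inj | exact: eval_at_adjoin_gen].
exact: pos_linear_inj (cut_ext_Iordered i0) (ordGs i0) _ (eval_pos i0).
Qed.

End CutExtension.

Lemma realizes_embedding (C : realFieldType) (I : Type) (G G' Gs : lmodType C)
  (lt' : I -> G' -> G' -> Prop) (lts : I -> Gs -> Gs -> Prop) (P : I -> G -> Prop)
  (f : {linear G -> G'}) (fs : {linear G -> Gs}) (j : {linear G' -> Gs}) (b : G') :
  Iordered lt' -> Iordered lts -> embedding lt' lts j -> (forall x, j (f x) = fs x) ->
  realizes lts fs P (j b) -> realizes lt' f P b.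
Proof.
move=> ord' ords [_ j_pos] jf jb_real i.
have reflect := pos_linear_reflect (ord' i) (ords i) (j_pos i).
have [below above] := jb_real i.
by split=> x Px; apply: reflect; rewrite jf; [apply: below | apply: above].
Qed.

Lemma inj_adjoin_direct_sum_line (C : realFieldType) (G G' : lmodType C)
  (f : {linear G -> G'}) (b : G') (j : {linear G' -> (G * C^o)%type}) :
  injective j -> (forall x, j (f x) = adjoin_inj x) -> j b = adjoin_gen ->
  direct_sum_line f b.
Proof.
move=> j_inj jf jb; split=> [y|x c fx_eq].
- exists (j y).1, (j y).2; apply: j_inj.
  rewrite linearD linearZ jf jb; case: (j y) => x d.
  congr (_, _); rewrite /adjoin_inj /adjoin_gen /=; first by rewrite scaler0 addr0.
  by rewrite add0r; exact: esym (mulr1 _).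
- have /(congr1 fst) : j (f x) = j (c *: b) by rewrite fx_eq.
  by rewrite jf linearZ jb /= scaler0 => ->; rewrite linear0.
Qed.

Theorem lemma3p2 (C : realFieldType) (I : Type) (i0 : I)
  (G : lmodType C) (lt : I -> G -> G -> Prop) (P : I -> G -> Prop) :
  Iordered lt -> polycut lt P ->
  (exists (G' : lmodType C) (lt' : I -> G' -> G' -> Prop)
          (f : {linear G -> G'}) (b : G'),
     [/\ Iordered lt', extends lt lt' f & universal_realizer lt P lt' f b])
  /\
  (forall (G' : lmodType C) (lt' : I -> G' -> G' -> Prop)
          (f : {linear G -> G'}) (b : G'),
     Iordered lt' -> extends lt lt' f -> universal_realizer lt P lt' f b ->
     realizes lt' f P b /\ direct_sum_line f b).
Proof.
move=> ordG cutP; have ord_ext := cut_ext_Iordered ordG cutP.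
split=> [|G' lt' f b ord' _ univ].
- exists (G * C^o)%type, (cut_ext_lt lt P), (@adjoin_inj C G), adjoin_gen.
  by split; [| exact: cut_ext_extends | exact: cut_ext_universal].
- have [j [[j_inj j_pos] jf jb]] :=
    univ _ _ _ _ ord_ext (cut_ext_extends P ordG) (adjoin_gen_realizes lt P).
  split; last exact: inj_adjoin_direct_sum_line jf jb.
  apply: realizes_embedding ord' ord_ext (conj j_inj j_pos) jf _.
  by rewrite jb; apply: adjoin_gen_realizes.
Qed.
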